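(* Let $n\ge 2K$, let $m_1,\dots,m_n$ be fixed constants, and let $M=\{(x_1,\dots,x_n)\in\mathbb{R}^n: x_1<x_2<\dots<x_n\}$ carry the Poisson bracket $\{f,g\}=\sum_{1\le i<j\le n}\operatorname{sgn}(x_i-x_j)\bigl(\frac{\partial f}{\partial x_i}\frac{\partial g}{\partial x_j}-\frac{\partial f}{\partial x_j}\frac{\partial g}{\partial x_i}\bigr)$, i.e. the bracket with $\{x_i,x_k\}=\operatorname{sgn}(x_i-x_k)$. Then for any subsets $I,J\subseteq\{1,\dots,K\}$, $$\Bigl\{\prod_{p\in I} m_{2p-1}m_{2p}e^{x_{2p-1}-x_{2p}},\ \prod_{q\in J} m_{2q-1}m_{2q}e^{x_{2q-1}-x_{2q}}\Bigr\}=0.$$ *)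

From HB Require Import structures.
From mathcomp Require Import all_boot all_order all_algebra.
From mathcomp Require Import all_classical all_reals all_analysis.
Set Implicit Arguments. Unset Strict Implicit. Unset Printing Implicit Defensive.
Import Order.TTheory GRing.Theory Num.Theory.
Import numFieldNormedType.Exports.
Local Open Scope ring_scope.

(* 1-based coordinate x_k of x in R^n (k = 1..n); 0 if out of range *)
Definition coord1 (R : realType) (n : nat) (x : 'rV[R]_n) (k : nat) : R :=
  match @insub nat (fun i => i < n)%N 'I_n k.-1 with
  | Some i => x ord0 i
  | None => 0
  end.

Definition partial (R : realType) (n : nat) (i : 'I_n)
  (f : 'rV[R]_n -> R) (x : 'rV[R]_n) : R :=
  'D_(delta_mx ord0 i) f x.

Definition pbracket (R : realType) (n : nat) (f g : 'rV[R]_n -> R)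
  (x : 'rV[R]_n) : R :=
  \sum_(i < n) \sum_(j < n | (i < j)%N)
     Num.sg (x ord0 i - x ord0 j) *
     (partial i f x * partial j g x - partial j f x * partial i g x).

Definition inM (R : realType) (n : nat) (x : 'rV[R]_n) : Prop :=
  forall i j : 'I_n, (i < j)%N -> x ord0 i < x ord0 j.

(* prod_{p in I} m_{2p-1} m_{2p} exp(x_{2p-1} - x_{2p}); I a subset of
   {1..K} encoded as a subset of 'I_K with p = i+1 *)
Definition prodF (R : realType) (n K : nat) (m : nat -> R) (I : {set 'I_K})
  (x : 'rV[R]_n) : R :=
  \prod_(i in I)
    (m (2 * i.+1 - 1)%N * m (2 * i.+1)%N *
     expR (coord1 x (2 * i.+1 - 1)%N - coord1 x (2 * i.+1)%N)).

From HB Require Import structures.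
From mathcomp Require Import all_boot all_order all_algebra.
From mathcomp Require Import all_classical all_reals all_analysis.
From mathcomp Require Import ring zify.
Import Order.TTheory GRing.Theory Num.Theory.
Import numFieldNormedType.Exports.
Set Implicit Arguments. Unset Strict Implicit. Unset Printing Implicit Defensive.
Local Open Scope ring_scope.

(* On M every sign sgn(x_i - x_j) with i < j equals -1, so there the bracket
   is the constant one.  Each product is a constant times exp of the linear
   form L_I = sum_(p in I) (x_(2p-1) - x_(2p)), so its partial derivatives are
   the product times the coefficients of L_I, and the bracket of two products
   is minus their product times the constant bivector sum_(i<j) e_i ^ e_j
   evaluated on the coefficient vectors of L_I and L_J.  These vectors are
   sums of dipoles e_(2p-1) - e_(2p) on disjoint pairs of adjacent indices,
   and two such dipoles pair to zero since any third index lies on the same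
   side of both points of a pair. *)

Section WedgeForm.
Variables (R : comNzRingType) (n : nat).

Definition sgnn (i j : nat) : R := (i < j)%:R - (j < i)%:R.

Definition wedge_form (a b : nat -> R) : R :=
  \sum_(i < n) \sum_(j < n | (i < j)%N) (a i * b j - a j * b i).

Definition dipole (k i : nat) : R := (i == k)%:R - (i == k.+1)%:R.

Lemma wedge_formE a b :
  wedge_form a b = \sum_(i < n) \sum_(j < n) sgnn i j * a i * b j.
Proof.
have split_diff (i : 'I_n) :
    \sum_(j < n | (i < j)%N) (a i * b j - a j * b i) =
    \sum_(j < n | (i < j)%N) a i * b j - \sum_(j < n | (i < j)%N) a j * b i.
  by rewrite sumrB.
rewrite /wedge_form (eq_bigr _ (fun i _ => split_diff i)) sumrB.
have -> : \sum_(i < n) \sum_(j < n | (i < j)%N) a j * b i =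
          \sum_(i < n) \sum_(j < n | (j < i)%N) a i * b j.
  by rewrite (exchange_big_dep xpredT).
rewrite -sumrB; apply: eq_bigr => i _.
rewrite [RHS](eq_bigr (fun j : 'I_n => (if (i < j)%N then a i * b j else 0) -
                                  (if (j < i)%N then a i * b j else 0))).
  by rewrite sumrB -!big_mkcond.
by move=> j _; rewrite /sgnn; case: ltngtP => _ /=; ring.
Qed.

Lemma wedge_formC a b : wedge_form a b = - wedge_form b a.
Proof.
rewrite /wedge_form -sumrN; apply: eq_bigr => i _.
by rewrite -sumrN; apply: eq_bigr => j _; rewrite opprB mulrC [a j * _]mulrC.
Qed.

Lemma wedge_form_suml (P : finType) (A : {pred P}) (a : P -> nat -> R) b :
  wedge_form (fun i => \sum_(p in A) a p i) b = \sum_(p in A) wedge_form (a p) b.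
Proof.
rewrite /wedge_form.
under eq_bigr => i _ do under eq_bigr => j _ do rewrite !mulr_suml -sumrB.
under eq_bigr => i _ do rewrite exchange_big.
by rewrite exchange_big.
Qed.

Lemma wedge_form_sumr (Q : finType) (B : {pred Q}) a (b : Q -> nat -> R) :
  wedge_form a (fun j => \sum_(q in B) b q j) = \sum_(q in B) wedge_form a (b q).
Proof.
rewrite wedge_formC wedge_form_suml -sumrN.
by apply: eq_bigr => q _; rewrite wedge_formC opprK.
Qed.

Lemma sum_delta k (F : nat -> R) : (k < n)%N ->
  \sum_(i < n) (i == k :> nat)%:R * F i = F k.
Proof.
move=> kn; rewrite (bigD1 (Ordinal kn)) //= eqxx mul1r big1 ?addr0 // => i ik.
rewrite (_ : (i == k :> nat) = false) ?mul0r //.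
by apply: contraNF ik => /eqP ik; apply/eqP/val_inj.
Qed.

Lemma sum_dipole k (F : nat -> R) : (k.+1 < n)%N ->
  \sum_(i < n) dipole k i * F i = F k - F k.+1.
Proof.
move=> kn; rewrite -(sum_delta F (ltnW kn)) -(sum_delta F kn) -sumrB.
by apply: eq_bigr => i _; rewrite mulrBl.
Qed.

Lemma sgnn_succr i k : i != k -> i != k.+1 -> sgnn i k = sgnn i k.+1.
Proof.
move=> ik ik1; rewrite /sgnn.
have -> : (i < k.+1)%N = (i < k)%N by lia.
by have -> : (k.+1 < i)%N = (k < i)%N by lia.
Qed.

Lemma wedge_form_dipole k l : (k.+1 < n)%N -> (l.+1 < n)%N ->
  k != l.+1 -> l != k.+1 -> wedge_form (dipole k) (dipole l) = 0.
Proof.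
move=> kn ln kl lk; rewrite wedge_formE.
transitivity (\sum_(i < n) dipole k i * \sum_(j < n) dipole l j * sgnn i j).
  apply: eq_bigr => i _; rewrite mulr_sumr; apply: eq_bigr => j _; ring.
under eq_bigr => i _ do rewrite (sum_dipole (sgnn i) ln).
rewrite (sum_dipole (fun i => sgnn i l - sgnn i l.+1) kn) /=.
have [->|kl'] := eqVneq k l.
  by rewrite /sgnn !ltnn ltnSn ltnNge leqnSn /=; ring.
have k1l : k.+1 != l by rewrite eq_sym.
by rewrite (sgnn_succr kl' kl) (sgnn_succr k1l (_ : k.+1 != l.+1)) ?eqSS // !subrr.
Qed.

End WedgeForm.

Arguments dipole {R} k i.

Section PhaseSpace.
Variables (R : realType) (n : nat).

Lemma pbracket_inM_logderiv (f g : 'rV[R]_n -> R) (a b : nat -> R) x :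
    inM x ->
    (forall k, partial k f x = f x * a k) ->
    (forall k, partial k g x = g x * b k) ->
  pbracket f g x = - (f x * g x) * wedge_form n a b.
Proof.
move=> xM df dg; rewrite /pbracket /wedge_form mulr_sumr; apply: eq_bigr => i _.
rewrite mulr_sumr; apply: eq_bigr => j ij.
by rewrite !df !dg ltr0_sg ?subr_lt0 ?xM //; ring.
Qed.

Lemma derive_comp_linear (V : normedModType R) (F : R -> R) (L : V -> R) v x :
  (forall h y, L (h *: v + y) = h * L v + L y) ->
  'D_v (F \o L) x = 'D_(L v) F (L x).
Proof.
move=> Llin; rewrite /derive; set d := (fun _ : R => _); set d' := (fun _ : R => _).
suff -> : d = d' by [].
by apply/funext => h; rewrite /d /d' /= Llin.
Qed.

Lemma derive_expR (a c : R) : 'D_c expR a = c * expR a.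
Proof.
have dexp : differentiable expR a by apply/derivable1_diffP; exact: derivable_expR.
by rewrite deriveE // diff1E // derive1E derive_val.
Qed.

Lemma coord1_scale_add (h : R) v x k :
  coord1 (h *: v + x) k = h * coord1 v k + coord1 (x : 'rV[R]_n) k.
Proof. by rewrite /coord1; case: insubP => [i _ _|_]; rewrite ?mxE ?mulr0 ?addr0. Qed.

Lemma coord1_delta (k : 'I_n) j : (0 < j <= n)%N ->
  coord1 (delta_mx ord0 k) j = (k == j.-1 :> nat)%:R :> R.
Proof.
move=> /andP[j0 jn]; rewrite /coord1.
case: insubP => [i _ ij|]; last by rewrite /=; lia.
by rewrite mxE /= eq_sym -ij.
Qed.

End PhaseSpace.

Section PairProducts.
Variables (R : realType) (n K : nat) (m : nat -> R).
Hypothesis Kn : (2 * K <= n)%N.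

Definition pair_weight (I : {set 'I_K}) : R :=
  \prod_(p in I) (m (2 * p.+1 - 1) * m (2 * p.+1)).

Definition pair_gaps (I : {set 'I_K}) (x : 'rV[R]_n) : R :=
  \sum_(p in I) (coord1 x (2 * p.+1 - 1) - coord1 x (2 * p.+1)).

Definition pair_dipoles (I : {set 'I_K}) (i : nat) : R :=
  \sum_(p in I) dipole (2 * p) i.

Lemma prodFE I x : prodF m I x = pair_weight I * expR (pair_gaps I x).
Proof. by rewrite /prodF big_split /= expR_sum. Qed.

Lemma pair_gaps_scale_add I h v x :
  pair_gaps I (h *: v + x) = h * pair_gaps I v + pair_gaps I x.
Proof.
rewrite /pair_gaps mulr_sumr -big_split /=; apply: eq_bigr => p _.
by rewrite !coord1_scale_add; ring.
Qed.

Lemma pair_gaps_delta I (k : 'I_n) :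
  pair_gaps I (delta_mx ord0 k) = pair_dipoles I k.
Proof.
apply: eq_bigr => p _; have pK := ltn_ord p.
rewrite !coord1_delta; try lia.
have -> : ((2 * p.+1 - 1).-1 = 2 * p)%N by lia.
by have -> : ((2 * p.+1).-1 = (2 * p).+1)%N by lia.
Qed.

Lemma partial_prodF I x (k : 'I_n) :
  partial k (prodF m I) x = prodF m I x * pair_dipoles I k.
Proof.
have -> : prodF m I = (pair_weight I \*: expR) \o pair_gaps I.
  by apply/funext => y; rewrite prodFE.
rewrite /partial derive_comp_linear; last by move=> h y; exact: pair_gaps_scale_add.
have dexp : derivable expR (pair_gaps I x) (pair_gaps I (delta_mx ord0 k)).
  by apply: diff_derivable; apply/derivable1_diffP; exact: derivable_expR.
have -> := deriveZ (pair_weight I) dexp.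
by rewrite derive_expR pair_gaps_delta /= scalerAr mulrC.
Qed.

Lemma wedge_form_pair_dipoles I J :
  wedge_form n (pair_dipoles I) (pair_dipoles J) = 0.
Proof.
rewrite wedge_form_suml big1 // => p _; rewrite wedge_form_sumr big1 // => q _.
have pK := ltn_ord p; have qK := ltn_ord q.
by apply: wedge_form_dipole; lia.
Qed.

End PairProducts.

Theorem lemma2 (R : realType) (n K : nat) (m : nat -> R)
  (hn : (2 * K <= n)%N) (I J : {set 'I_K}) (x : 'rV[R]_n) :
  inM x -> pbracket (prodF m I) (prodF m J) x = 0.
Proof.
move=> xM.
rewrite (pbracket_inM_logderiv xM (partial_prodF m hn I x) (partial_prodF m hn J x)).
by rewrite wedge_form_pair_dipoles // mulr0.
Qed.
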